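(* Let $1\ge\Delta^{-1},q\gg L^{-1}\gg n^{-1}$. Let $G$ be a $q$-cut-dense graph of order $n$, let $v\in V(G)$ and let $U\subseteq V(G)$ with $|U|\ge L$. Then $G$ contains, as a subgraph, a perfect $\Delta$-ary tree of height at most $19q^{-4}$ rooted at $v$ with all its leaves in $U$.
   Context: A graph $G$ is $q$-cut-dense if for every partition $V(G)=A\cup B$ into disjoint sets, the number of edges between $A$ and $B$ is at least $q|A||B|$. A $\Delta$-ary tree is one in which every non-leaf vertex has degree $\Delta$; a perfect $\Delta$-ary tree of height $h$ has a designated root with every leaf at distance $h$ from the root. The hierarchy means: given $\Delta$ and $q$, $L$ is sufficiently large, and given $L$, $n$ is sufficiently large. *)

From HB Require Import structures.
From mathcomp Require Import all_boot all_order all_algebra.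
From mathcomp Require Import reals.
Set Implicit Arguments. Unset Strict Implicit. Unset Printing Implicit Defensive.
Import Order.TTheory GRing.Theory Num.Theory.
Local Open Scope ring_scope.

(* A simple graph is a symmetric irreflexive relation e on a finite type T. *)

Definition cut_edges (T : finType) (e : rel T) (A : {set T}) : nat :=
  #|[set p : T * T | (p.1 \in A) && (p.2 \notin A) && e p.1 p.2]|.

Definition cut_dense (R : realType) (T : finType) (e : rel T) (q : R) : Prop :=
  forall A : {set T}, q * (#|A|%:R) * (#|~: A|%:R) <= (cut_edges e A)%:R.

(* The tree is encoded by its vertex set S,
   a parent map par and a depth map d: the tree edges are {x, par x}
   (x in S, x <> v), which must be edges of G; depth increases by one along
   each tree edge; every vertex has depth <= h; every vertex of depth < h
   (non-leaf) has degree D in the tree, i.e. D children if it is the root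
   and D - 1 children (plus its parent) otherwise; every vertex of depth h
   (a leaf, all at distance h from the root) lies in U. *)
Definition contains_perfect_tree (T : finType) (e : rel T) (D h : nat)
    (v : T) (U : {set T}) : Prop :=
  exists (S : {set T}) (par : T -> T) (d : T -> nat),
    [/\ v \in S /\ d v = 0%N,
     forall x, x \in S -> x != v ->
       [/\ par x \in S, e x (par x) & d x = (d (par x)).+1],
     forall x, x \in S -> (d x <= h)%N,
     forall x, x \in S -> (d x < h)%N ->
       #|[set y in S | (y != v) && (par y == x)]| = (if x == v then D else D.-1)
     & forall x, x \in S -> d x = h -> x \in U].

(* Let N(A) be the set of vertices with at least K neighbours in A, where K exceeds
   the size of a perfect D-ary tree of the target height.  If v lies in Y_h and
   Y_(j+1) is contained in N(Y_j) for all j, a perfect tree rooted at v with its leaves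
   in Y_0 = U can be grown greedily, since a vertex never runs out of unused neighbours
   on the next level.  Cut-density produces such levels: N(U) has linear size, a
   minimal-pair argument extracts P in N(U) with P contained in N(N(P)), and as long
   as v avoids the iterates N^i(P), cut-density makes |N^(2m)(P)| grow by q^2 n / 3
   with every m.  Hence v lies in some N^i(P) with i = O(q^-2). *)

From HB Require Import structures.
From mathcomp Require Import all_boot all_order all_algebra.
From mathcomp Require Import reals.
From mathcomp Require Import zify lra.
Import Order.TTheory GRing.Theory Num.Theory.

Set Implicit Arguments. Unset Strict Implicit. Unset Printing Implicit Defensive.

Section Neighbourhoods.
Variables (T : finType) (e : rel T).
Hypothesis esym : symmetric e.

Definition deg_in (x : T) (A : {set T}) : nat := #|[set y in A | e x y]|.

Definition rich_nbhd (K : nat) (A : {set T}) : {set T} := [set x | K <= deg_in x A].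

Lemma card_setI_pred (A : {set T}) (P : pred T) :
  #|[set y in A | P y]| = \sum_(y in A) P y.
Proof.
rewrite -sum1_card big_mkcond [RHS]big_mkcond /=.
by apply: eq_bigr => y _; rewrite inE; case: (y \in A); case: (P y).
Qed.

Lemma deg_inE x A : deg_in x A = \sum_(y in A) e x y.
Proof. exact: card_setI_pred. Qed.

Lemma deg_in_le_card x A : deg_in x A <= #|A|.
Proof. by apply: subset_leq_card; apply/subsetP => y; rewrite inE => /andP[]. Qed.

Lemma deg_inS x (A B : {set T}) : A \subset B -> deg_in x A <= deg_in x B.
Proof.
move=> /subsetP AB; apply: subset_leq_card; apply/subsetP => y.
by rewrite !inE => /andP[/AB -> ->].
Qed.

Lemma deg_inU x (A B : {set T}) : deg_in x (A :|: B) <= deg_in x A + deg_in x B.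
Proof.
apply: leq_trans (leq_card_setU _ _); apply: subset_leq_card; apply/subsetP => y.
by rewrite !inE; case: (y \in A); case: (y \in B); case: (e x y).
Qed.

Lemma deg_inT x (A : {set T}) : deg_in x [set: T] = deg_in x A + deg_in x (~: A).
Proof. by rewrite !deg_inE (big_setID A) /= setTI setTD. Qed.

Lemma rich_nbhdS K (A B : {set T}) : A \subset B -> rich_nbhd K A \subset rich_nbhd K B.
Proof.
by move=> AB; apply/subsetP => x; rewrite !inE => /leq_trans; apply; apply: deg_inS.
Qed.

Lemma sum_deg_inC (A B : {set T}) :
  \sum_(x in A) deg_in x B = \sum_(y in B) deg_in y A.
Proof.
under eq_bigr do rewrite deg_inE.
rewrite exchange_big /=; apply: eq_bigr => y _; rewrite deg_inE.
by apply: eq_bigr => x _; rewrite esym.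
Qed.

Lemma cut_edgesE (A : {set T}) : cut_edges e A = \sum_(b in ~: A) deg_in b A.
Proof.
rewrite /cut_edges -sum1_card.
rewrite (eq_bigl (fun p : T * T => (p.1 \in A) && ((p.2 \in ~: A) && e p.1 p.2))); last first.
  by move=> [a b]; rewrite !inE andbA.
rewrite -(pair_big_dep (mem A) (fun a b => (b \in ~: A) && e a b) (fun _ _ => 1)) /=.
rewrite (exchange_big_dep (mem (~: A))) /=; last by move=> i j _ /andP[].
apply: eq_bigr => b bA; rewrite deg_inE big_mkcond [RHS]big_mkcond /=.
by apply: eq_bigr => a _; rewrite bA esym; case: (a \in A); case: (e b a).
Qed.

Lemma deg_in_avoid x (A F : {set T}) :
  #|F| < deg_in x A -> exists2 y, y \in A :\: F & e x y.
Proof.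
rewrite /deg_in => F_lt; have /card_gt0P [y] : 0 < #|[set y in A | e x y] :\: F|.
  by rewrite cardsD; have := subset_leq_card (subsetIr [set y in A | e x y] F); lia.
by rewrite !inE => /andP[yF /andP[yA exy]]; exists y; rewrite // !inE yF.
Qed.

Hypothesis eirr : irreflexive e.

Lemma cut_edges_set1 x : cut_edges e [set x] = deg_in x [set: T].
Proof.
rewrite cut_edgesE deg_inE [RHS](big_setID [set x]) /= setTI setTD big_set1 eirr add0n.
by apply: eq_bigr => y _; rewrite deg_inE big_set1 esym.
Qed.

End Neighbourhoods.

Section Trees.
Variables (T : finType) (e : rel T).
Hypothesis esym : symmetric e.
Variables (D : nat) (U : {set T}).

Definition children (S : {set T}) (r : T) (par : T -> T) (x : T) : {set T} :=
  [set y in S | (y != r) && (par y == x)].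

(* [contains_perfect_tree e D h r U], except that the root has [c] children. *)
Definition is_tree (h c : nat) (r : T) (S : {set T}) (par : T -> T) (d : T -> nat) :=
  [/\ r \in S /\ d r = 0,
   forall x, x \in S -> x != r -> [/\ par x \in S, e x (par x) & d x = (d (par x)).+1],
   forall x, x \in S -> d x <= h,
   forall x, x \in S -> d x < h -> #|children S r par x| = (if x == r then c else D.-1)
   & forall x, x \in S -> d x = h -> x \in U].

Lemma children_notin (S : {set T}) r par z : (forall w, w \in S -> w != r -> par w \in S) ->
  z \notin S -> children S r par z = set0.
Proof.
move=> parS zS; apply/setP => w; rewrite !inE.
by apply/and3P => -[wS wr /eqP pw]; move: zS; rewrite -pw parS.
Qed.

Lemma is_tree_set1 h c r : (h = 0 -> r \in U) -> (0 < h -> c = 0) ->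
  is_tree h c r [set r] id (fun _ => 0).
Proof.
move=> h0 c0; split.
- by rewrite set11.
- by move=> x; rewrite inE => ->.
- by [].
- move=> x; rewrite inE => /eqP -> /c0 ->; rewrite eqxx; apply/eqP.
  by rewrite cards_eq0; apply/eqP/setP => y; rewrite !inE; case: (y == r).
- by move=> x; rewrite inE => /eqP -> h0x; apply: h0; rewrite -h0x.
Qed.

Definition graft_par (S2 : {set T}) (y x : T) (p1 p2 : T -> T) (z : T) : T :=
  if z \in S2 then (if z == y then x else p2 z) else p1 z.

Definition graft_depth (S2 : {set T}) (d1 d2 : T -> nat) (z : T) : nat :=
  if z \in S2 then (d2 z).+1 else d1 z.

Lemma children_graft (S1 S2 : {set T}) x y p1 p2 z :
  [disjoint S1 & S2] -> x \notin S2 -> y \in S2 ->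
  children (S1 :|: S2) x (graft_par S2 y x p1 p2) z =
  children S1 x p1 z :|: children S2 y p2 z :|: (if z == x then [set y] else set0).
Proof.
move=> dis xS2 yS2; apply/setP => w; rewrite /graft_par !inE.
case wS2: (w \in S2).
- have -> : w \in S1 = false by apply/negbTE; rewrite (disjointFl dis wS2).
  have -> /= : w != x by apply: contraTneq wS2 => ->.
  case: (eqVneq w y) => [->|wy] /=.
  + by case: (eqVneq z x); rewrite ?inE ?eqxx.
  + by case: (z == x); rewrite ?inE ?(negbTE wy) ?orbF.
- have wy : w == y = false by apply: contraFF wS2 => /eqP ->.
  by case: (z == x); rewrite ?inE ?wy /= ?orbF.
Qed.

Lemma is_tree_graft h c x y S1 p1 d1 S2 p2 d2 :
  is_tree h.+1 c x S1 p1 d1 -> is_tree h D.-1 y S2 p2 d2 -> e x y -> [disjoint S1 & S2] ->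
  is_tree h.+1 c.+1 x (S1 :|: S2) (graft_par S2 y x p1 p2) (graft_depth S2 d1 d2).
Proof.
move=> [[xS1 dx] P1 B1 C1 L1] [[yS2 dy] P2 B2 C2 L2] exy dis.
have S1N2 z : z \in S1 -> (z \in S2) = false by move=> zS1; rewrite (disjointFr dis zS1).
have xS2 := S1N2 x xS1; have yS1 : (y \in S1) = false by rewrite (disjointFl dis yS2).
have par1 w : w \in S1 -> w != x -> p1 w \in S1 by move=> wS wx; case: (P1 w wS wx).
have par2 w : w \in S2 -> w != y -> p2 w \in S2 by move=> wS wy; case: (P2 w wS wy).
split.
- by rewrite /graft_depth inE xS1 xS2.
- move=> z; rewrite /graft_par /graft_depth inE => /orP[zS1|zS2] zx.
  + have [pS ez dz] := P1 z zS1 zx.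
    by rewrite S1N2 // inE pS S1N2.
  + rewrite zS2; case: eqVneq => [->|zy].
    * by rewrite inE xS1 xS2 esym exy dy dx.
    * by have [pS ez dz] := P2 z zS2 zy; rewrite inE pS orbT dz.
- move=> z; rewrite /graft_depth inE => /orP[zS1|zS2].
  + by rewrite S1N2 //; apply: B1.
  + by rewrite zS2 ltnS; apply: B2.
- move=> z; rewrite /graft_depth children_graft ?xS2 // inE => /orP[zS1|zS2].
  + rewrite S1N2 // => dz; rewrite (children_notin par2) ?S1N2 // setU0.
    case: (eqVneq z x) dz => [-> dx1|zx dz]; last by rewrite setU0 C1 // (negbTE zx).
    by rewrite setUC cardsU1 inE yS1 C1 // eqxx.
  + rewrite zS2 ltnS => dz; have zS1 : (z \in S1) = false by rewrite (disjointFl dis zS2).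
    have zx : z != x by apply: contraFneq zS1 => ->.
    by rewrite (negbTE zx) setU0 (children_notin par1) ?zS1 // set0U C2 //; case: ifP.
- move=> z; rewrite /graft_depth inE => /orP[zS1|zS2].
  + by rewrite S1N2 //; apply: L1.
  + by rewrite zS2 => -[]; apply: L2.
Qed.

Variables (K : nat) (Y : nat -> {set T}).
Hypothesis Y0U : Y 0 \subset U.
Hypothesis Y_rich : forall h x, x \in Y h.+1 -> K <= deg_in e x (Y h).

Definition tree_card_bound (h c : nat) : nat := if h is h'.+1 then 1 + c * D.+1 ^ h' else 1.

Lemma tree_card_bound_le h : tree_card_bound h D.-1 <= D.+1 ^ h.
Proof. by case: h => [|h] //=; rewrite expnS; have := expn_gt0 D.+1 h; case: D => [|?]; nia. Qed.

Lemma greedy_tree h : forall c x (F : {set T}), x \in Y h -> x \notin F -> c <= D ->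
  #|F| + D.+1 ^ h < K ->
  exists S p d, [/\ is_tree h c x S p d, [disjoint S & F] & #|S| <= tree_card_bound h c].
Proof.
elim: h => [|h IHh] c x F xY xF cD hK.
  exists [set x], id, (fun _ => 0); split.
  - by apply: is_tree_set1 => // _; apply: (subsetP Y0U).
  - by rewrite disjoints1.
  - by rewrite cards1.
elim: c cD => [|c IHc] cD.
  exists [set x], id, (fun _ => 0); split.
  - exact: is_tree_set1.
  - by rewrite disjoints1.
  - by rewrite cards1.
have [S1 [p1 [d1 [T1 dis1 sz1]]]] := IHc (ltnW cD).
have room : #|F :|: S1| + D.+1 ^ h < K.
  apply: leq_ltn_trans hK; have : #|F :|: S1| <= #|F| + #|S1| := leq_card_setU F S1.
  by have := expn_gt0 D.+1 h; move: sz1; rewrite /= expnS; nia.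
have [y] : exists2 y, y \in Y h :\: (F :|: S1) & e x y.
  apply: deg_in_avoid; apply: leq_trans (Y_rich xY); apply: leq_ltn_trans room.
  exact: leq_addr.
rewrite inE => /andP[yFS1 yY] exy.
have [S2 [p2 [d2 [T2 dis2 sz2]]]] := IHh D.-1 y (F :|: S1) yY yFS1 (leq_pred _) room.
have dis12 : [disjoint S1 & S2] by rewrite disjoint_sym (disjointWr (subsetUr F S1) dis2).
exists (S1 :|: S2), (graft_par S2 y x p1 p2), (graft_depth S2 d1 d2); split.
- exact: is_tree_graft.
- by rewrite disjoints_subset subUset -!disjoints_subset dis1 (disjointWr (subsetUl F S1) dis2).
- apply: leq_trans (leq_card_setU _ _) _; have := tree_card_bound_le h.
  by move: sz1 sz2; rewrite /= mulSn; lia.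
Qed.

Lemma perfect_tree_greedy h x : x \in Y h -> D.+1 ^ h < K -> contains_perfect_tree e D h x U.
Proof.
move=> xY hK; have [|S [p [d [Tr _ _]]]] := greedy_tree xY (negbT (in_set0 x)) (leqnn D).
  by rewrite cards0.
by exists S, p, d.
Qed.

End Trees.

Section RichNeighbourhoods.
Variables (T : finType) (e : rel T).
Hypothesis esym : symmetric e.
Variable K : nat.
Local Notation N := (rich_nbhd e K).

Lemma not_rich_nbhd x (A : {set T}) : (x \notin N A) = (deg_in e x A < K).
Proof. by rewrite inE -ltnNge. Qed.

Lemma iter_rich_nbhd_sub (P : {set T}) i :
  P \subset N (N P) -> iter i N P \subset iter i.+2 N P.
Proof. by move=> PNNP; elim: i => [|i IH] //=; apply: rich_nbhdS. Qed.

Lemma sub_iter_rich_nbhd (P : {set T}) m : P \subset N (N P) -> P \subset iter (2 * m) N P.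
Proof.
move=> PNNP; elim: m => [|m IH]; first by rewrite muln0.
by apply: subset_trans IH _; rewrite mulnS !addSn; apply: iter_rich_nbhd_sub.
Qed.

Lemma rich_core (W : {set T}) : exists P Q : {set T},
  [/\ P \subset W, P \subset N Q, Q \subset N P &
      \sum_(x in W) deg_in e x [set: T] <= (#|P| + 2 * K) * #|T|].
Proof.
pose ecount (P Q : {set T}) := \sum_(p in P) deg_in e p Q.
pose good (PQ : {set T} * {set T}) := (PQ.1 \subset W) &&
  (\sum_(x in W) deg_in e x [set: T] <= ecount PQ.1 PQ.2 + K * (#|W :\: PQ.1| + #|~: PQ.2|)).
have goodWT : good (W, [set: T]).
  by rewrite /good /= subxx setDv setCT !cards0 addn0 muln0 addn0 /=.
(* Deleting from P or Q a vertex with fewer than K neighbours on the other side loses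
   fewer than K edges, so a minimal good pair has no such vertex. *)
case: (arg_minnP (fun PQ : {set T} * {set T} => #|PQ.1| + #|PQ.2|) goodWT).
move=> -[P Q] /= /andP[PW hE] hmin.
have PQ : P \subset N Q.
  apply/subsetP => p pP; apply/negPn/negP; rewrite not_rich_nbhd => lt.
  have : good (P :\ p, Q).
    rewrite /good /= (subset_trans (subsetDl _ _) PW) /=.
    have -> : W :\: (P :\ p) = p |: (W :\: P).
      by apply/setP => z; rewrite !inE; case: (eqVneq z p) => [->|] //=; rewrite (subsetP PW).
    rewrite cardsU1 !inE pP /=.
    by move: hE; rewrite /ecount (big_setD1 _ pP) /=; lia.
  by move=> /hmin /=; rewrite (cardsD1 p P) pP; lia.
have QP : Q \subset N P.
  apply/subsetP => y yQ; apply/negPn/negP; rewrite not_rich_nbhd => lt.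
  have : good (P, Q :\ y).
    rewrite /good /= PW /=.
    have -> : ~: (Q :\ y) = y |: ~: Q.
      by apply/setP => z; rewrite !inE; case: (eqVneq z y) => [->|].
    rewrite cardsU1 !inE yQ /=.
    have split_y : ecount P Q = ecount P (Q :\ y) + deg_in e y P.
      rewrite /ecount deg_inE -big_split /=; apply: eq_bigr => p _.
      by rewrite !deg_inE (big_setD1 _ yQ) addnC esym.
    by move: hE; rewrite split_y /ecount /=; lia.
  by move=> /hmin /=; rewrite (cardsD1 y Q) yQ; lia.
exists P, Q; split => //; apply: leq_trans hE _.
have ecount_le : ecount P Q <= #|P| * #|T|.
  rewrite /ecount -sum_nat_const; apply: leq_sum => p _.
  exact: leq_trans (deg_in_le_card _ _ _) (max_card _).
rewrite /= mulnDl leq_add // [2 * K]mulnC -mulnA leq_mul2l mul2n -addnn.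
by rewrite leq_add ?orbT // max_card.
Qed.

Lemma deg_le_rich (A : {set T}) v : A \subset N (N A) ->
  v \notin N (N A) -> v \notin N (N (N A)) ->
  deg_in e v [set: T] <= 2 * K + #|~: (A :|: N A)|.
Proof.
rewrite !not_rich_nbhd => ANNA v2 v3.
rewrite (deg_inT _ v (A :|: N A)) leq_add ?deg_in_le_card //.
apply: leq_trans (deg_inU _ _ _ _) _.
have := leq_ltn_trans (deg_inS e v ANNA) v3; lia.
Qed.

Lemma cut_edges_rich (A : {set T}) :
  cut_edges e (A :|: N A) <=
  2 * K * #|~: (A :|: N A)| + #|A :|: N A| * #|N (N A) :\: A|.
Proof.
set S := A :|: N A; rewrite (cut_edgesE esym).
apply: (@leq_trans (\sum_(b in ~: S) (2 * K + #|S| * (b \in N (N A) :\: A)))).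
  apply: leq_sum => b; rewrite inE in_setU negb_or => /andP[bA bNA].
  apply: leq_trans (deg_inU _ _ _ _) _; rewrite mul2n -addnn -addnA.
  apply: leq_add; first by apply: ltnW; rewrite -not_rich_nbhd.
  have [bNNA|bNNA] := boolP (b \in N (N A)).
    rewrite inE bA bNNA muln1 (leq_trans (deg_in_le_card _ _ _)) //.
    by rewrite (leq_trans _ (leq_addl _ _)) // subset_leq_card // subsetUr.
  by rewrite inE (negbTE bNNA) andbF muln0 addn0 ltnW // -not_rich_nbhd.
rewrite big_split /= sum_nat_const -big_distrr /= mulnC leq_add // leq_mul2l.
rewrite -card_setI_pred subset_leq_card ?orbT //.
by apply/subsetP => b; rewrite inE => /andP[].
Qed.

Lemma sum_deg_in_rich (U : {set T}) :
  \sum_(x in [set: T]) deg_in e x U <= #|N U| * #|U| + #|T| * K.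
Proof.
apply: (@leq_trans (\sum_(x in [set: T]) (#|U| * (x \in N U) + K))).
  apply: leq_sum => x _; have [xNU|xNU] := boolP (x \in N U).
    by rewrite muln1 (leq_trans (deg_in_le_card _ _ _)) // leq_addr.
  by rewrite muln0 ltnW // -not_rich_nbhd.
rewrite big_split /= -big_distrr /= -card_setI_pred sum_nat_const cardsT mulnC.
have -> // : [set y in [set: T] | y \in N U] = N U by apply/setP => x; rewrite !inE.
Qed.

End RichNeighbourhoods.

Local Open Scope ring_scope.

Section CutDense.
Variables (R : realType) (T : finType) (e : rel T).
Hypotheses (esym : symmetric e) (eirr : irreflexive e).
Variables (q : R) (K : nat).
Hypotheses (q_gt0 : 0 < q) (q_le1 : q <= 1) (K_gt0 : (0 < K)%N).
Hypothesis cdense : cut_dense e q.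
Hypothesis T_large : 12 * K%:R <= q ^+ 3 * (#|T|%:R - 4).
Local Notation N := (rich_nbhd e K).

Let K_gt0R : 0 < K%:R :> R. Proof. by rewrite ltr0n. Qed.

Let q3_gt0 : 0 < q ^+ 3. Proof. by rewrite exprn_gt0. Qed.

Let q3_le_q : q ^+ 3 <= q.
Proof. by rewrite -[leRHS]expr1; apply: ler_wiXn2l => //; apply: ltW. Qed.

Lemma card_T_gt4 : 4 < #|T|%:R :> R.
Proof.
have : 0 < q ^+ 3 * (#|T|%:R - 4) by apply: lt_le_trans T_large; rewrite mulr_gt0.
by rewrite pmulr_rgt0 // subr_gt0.
Qed.

Lemma q_card_T_large : 3 * q + 6 * K%:R <= q * #|T|%:R.
Proof.
have : q ^+ 3 * (#|T|%:R - 4) <= q * (#|T|%:R - 4).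
  by apply: ler_wpM2r q3_le_q; rewrite subr_ge0 ltW // card_T_gt4.
move: T_large K_gt0R q_gt0; lra.
Qed.

Lemma deg_ge v : q * (#|T|%:R - 1) <= (deg_in e v [set: T])%:R.
Proof.
have T_gt0 : (0 < #|T|)%N by apply/card_gt0P; exists v.
have := cdense [set v]; rewrite cards1 mulr1 cardsC1 (cut_edges_set1 esym eirr).
by rewrite -[in X in q * (X%:R - 1)](prednK T_gt0) -natr1 addrK.
Qed.

Lemma sum_deg_ge (A : {set T}) :
  #|A|%:R * (q * (#|T|%:R - 1)) <= (\sum_(x in A) deg_in e x [set: T])%:R.
Proof. by rewrite natr_sum mulr_natl -sumr_const; apply: ler_sum => x _; apply: deg_ge. Qed.

Lemma rich_nbhd_large (U : {set T}) :
  4 * K%:R <= q * #|U|%:R -> q * #|T|%:R / 2 <= #|N U|%:R.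
Proof.
move=> U_large; have lower := sum_deg_ge U; rewrite -(sum_deg_inC esym) in lower.
have upper := sum_deg_in_rich e K U; rewrite -(ler_nat R) natrD !natrM in upper.
have U_gt0 : 0 < #|U|%:R :> R.
  by rewrite -(pmulr_rgt0 _ q_gt0); apply: lt_le_trans U_large; rewrite mulr_gt0.
have := le_trans lower upper; have := card_T_gt4; have := K_gt0R; have := q_gt0; nra.
Qed.

Lemma rich_core_large (W P : {set T}) : q * #|T|%:R / 2 <= #|W|%:R ->
  (\sum_(x in W) deg_in e x [set: T] <= (#|P| + 2 * K) * #|T|)%N ->
  4 * K%:R <= q * #|P|%:R.
Proof.
move=> W_large sumW; rewrite -(ler_nat R) natrM natrD natrM in sumW.
have T_gt0 : 0 < #|T|%:R :> R by have := card_T_gt4; lra.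
have half_q2 : q ^+ 2 * (#|T|%:R - 1) / 2 <= #|P|%:R + 2%:R * K%:R.
  rewrite -(ler_pM2l T_gt0) [X in _ <= X]mulrC; apply: le_trans sumW.
  apply: le_trans (sum_deg_ge W); rewrite expr2.
  have : 0 <= q * (#|T|%:R - 1) by apply: mulr_ge0; [apply: ltW | have := card_T_gt4; lra].
  nra.
have : q * (q ^+ 2 * (#|T|%:R - 1) / 2) <= q * (#|P|%:R + 2%:R * K%:R) by rewrite ler_pM2l.
have : K%:R * q <= K%:R by rewrite ler_piMr // ltW.
have : 0 <= q ^+ 3 by apply: ltW.
have := T_large; rewrite exprS; nra.
Qed.

Lemma rich_growth (A : {set T}) v : A \subset N (N A) ->
  v \notin N (N A) -> v \notin N (N (N A)) -> 4 * K%:R <= q * #|A|%:R ->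
  #|A|%:R + q ^+ 2 * #|T|%:R / 3 <= #|N (N A)|%:R.
Proof.
move=> ANNA v2 v3 A_large; rewrite -(cardsID A (N (N A))) (setIidPr ANNA) natrD lerD2l.
have deg_v := deg_le_rich ANNA v2 v3; rewrite -(ler_nat R) natrD natrM in deg_v.
have cut_S := cut_edges_rich esym K A; rewrite -(ler_nat R) natrD !natrM in cut_S.
have {}cut_S := le_trans (cdense _) cut_S.
have A_S : #|A|%:R <= #|A :|: N A|%:R :> R by rewrite ler_nat subset_leq_card ?subsetUl.
move: (deg_ge v) deg_v cut_S A_S; set w := #|~: _|%:R; set s := #|A :|: N A|%:R.
set dl := #|_ :\: A|%:R => deg_v1 deg_v2 cut_S A_S.
have S_large : 4 * K%:R <= q * s by apply: le_trans A_large _; rewrite ler_pM2l.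
have s_gt0 : 0 < s by have := K_gt0R; have := q_gt0; nra.
(* [2 K <= q s / 2], so the cut bound [q s w <= 2 K w + s dl] gives [q w / 2 <= dl]. *)
have dl_ge : q * w / 2 <= dl.
  rewrite -(ler_pM2l s_gt0).
  have : 0 <= w * (q * s - 4 * K%:R) by rewrite mulr_ge0 ?ler0n // subr_ge0.
  lra.
have : 0 <= q * (w - (q * (#|T|%:R - 1) - 2 * K%:R)) by apply: mulr_ge0 (ltW q_gt0) _; lra.
have : 0 <= q * (q * #|T|%:R - 3 * q - 6 * K%:R).
  by apply: mulr_ge0 (ltW q_gt0) _; have := q_card_T_large; lra.
lra.
Qed.

Lemma iter_rich_hit_or_grow (P : {set T}) v m :
  P \subset N (N P) -> 4 * K%:R <= q * #|P|%:R ->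
  (exists2 i, (i <= (2 * m).+1)%N & v \in iter i N P) \/
  m%:R * (q ^+ 2 * #|T|%:R / 3) <= #|iter (2 * m) N P|%:R.
Proof.
move=> PNNP P_large; elim: m => [|m [[i i_le vi]|IH]]; first by right; rewrite mul0r.
  by left; exists i => //; lia.
have [v2|v2] := boolP (v \in iter (2 * m).+2 N P); first by left; exists (2 * m).+2 => //; lia.
have [v3|v3] := boolP (v \in iter (2 * m).+3 N P); first by left; exists (2 * m).+3 => //; lia.
right; have A_large : 4 * K%:R <= q * #|iter (2 * m) N P|%:R.
  apply: le_trans P_large _; rewrite ler_pM2l // ler_nat subset_leq_card //.
  exact: sub_iter_rich_nbhd.
have := rich_growth (iter_rich_nbhd_sub _ PNNP) v2 v3 A_large.
have -> : (2 * m.+1 = (2 * m).+2)%N by lia.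
by rewrite -[m.+1%:R]natr1 /=; lra.
Qed.

Lemma iter_rich_hit (P : {set T}) v M : P \subset N (N P) -> 4 * K%:R <= q * #|P|%:R ->
  3 < M%:R * q ^+ 2 -> exists2 i, (i <= (2 * M).+1)%N & v \in iter i N P.
Proof.
move=> PNNP P_large M_large; have [//|grow] := iter_rich_hit_or_grow v M PNNP P_large.
have : #|iter (2 * M) N P|%:R <= #|T|%:R :> R by rewrite ler_nat max_card.
have : 0 < (M%:R * q ^+ 2 - 3) * #|T|%:R.
  by rewrite mulr_gt0 ?subr_gt0 //; have := card_T_gt4; lra.
lra.
Qed.

Lemma cut_dense_perfect_tree D M (U : {set T}) v :
  4 * K%:R <= q * #|U|%:R -> 3 < M%:R * q ^+ 2 -> (D.+1 ^ (2 * M).+2 < K)%N ->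
  exists2 h, (h <= (2 * M).+2)%N & contains_perfect_tree e D h v U.
Proof.
move=> U_large M_large K_large.
have [P [Q [PNU PNQ QNP sumW]]] := rich_core esym K (N U).
have P_large := rich_core_large (rich_nbhd_large U_large) sumW.
have PNNP : P \subset N (N P) := subset_trans PNQ (rich_nbhdS e K QNP).
have [i i_le vi] := iter_rich_hit v PNNP P_large M_large.
pose Y h := if h is h'.+1 then iter h' N P else U.
have Y_rich h x : x \in Y h.+1 -> (K <= deg_in e x (Y h))%N.
  by case: h => [/(subsetP PNU)|h] /=; rewrite inE.
exists i.+1 => //.
apply: (perfect_tree_greedy esym (Y := Y) (subxx U) Y_rich (h := i.+1) vi).
by apply: leq_ltn_trans K_large; rewrite leq_pexp2l.
Qed.

End CutDense.

Lemma natr_gt_truncn (R : archiRealDomainType) (x : R) n : (Num.truncn x < n)%N -> x < n%:R.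
Proof. by move=> lt_xn; apply: lt_le_trans (truncnS_gt x) _; rewrite ler_nat. Qed.

Lemma height_bound (R : realFieldType) (q : R) M : 0 < q -> q <= 1 ->
  M%:R <= 3 / q ^+ 2 + 1 -> (2 * M).+2%:R <= 19 / q ^+ 4.
Proof.
move=> q_gt0 q_le1 M_le; set t := (q ^+ 2)^-1 in M_le.
have -> : 19 / q ^+ 4 = 19 * (t * t) by rewrite /t -invfM -expr2 -exprM.
have t_ge1 : 1 <= t by rewrite invf_ge1 ?exprn_gt0 ?exprn_ile1 // ltW.
by rewrite -natr1 -natr1 natrM; nra.
Qed.

Unset Implicit Arguments.
Theorem lemma7p2 (R : realType) (D : nat) (q : R) :
  (1 <= D)%N -> 0 < q -> q <= 1 ->
  exists L0 : nat, forall L : nat, (L0 <= L)%N ->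
  exists n0 : nat, forall n : nat, (n0 <= n)%N ->
  forall (T : finType) (e : rel T),
    symmetric e -> irreflexive e -> #|T| = n -> cut_dense e q ->
    forall (v : T) (U : {set T}), (L <= #|U|)%N ->
    exists h : nat, h%:R <= 19 / q ^+ 4 /\ contains_perfect_tree e D h v U.
Proof.
(* The construction also works for D = 0. *)
move=> _ q_gt0 q_le1.
pose M := (Num.truncn (3 / q ^+ 2)).+1; pose K := (D.+1 ^ (2 * M).+2).+1.
exists (Num.truncn (4 * K%:R / q)).+1 => L /natr_gt_truncn L_large.
exists (Num.truncn (4 + 12 * K%:R / q ^+ 3)).+1 => n /natr_gt_truncn n_large.
move=> T e esym eirr card_T cdense v U U_ge.
have M_large : 3 < M%:R * q ^+ 2.
  by rewrite -ltr_pdivrMr ?exprn_gt0 //; apply: natr_gt_truncn.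
have U_large : 4 * K%:R <= q * #|U|%:R.
  have : q * L%:R <= q * #|U|%:R by rewrite ler_pM2l // ler_nat.
  by rewrite ltr_pdivrMr // in L_large; lra.
have T_large : 12 * K%:R <= q ^+ 3 * (#|T|%:R - 4).
  have q3_gt0 : 0 < q ^+ 3 by rewrite exprn_gt0.
  have : 12 * K%:R / q ^+ 3 * q ^+ 3 = 12 * K%:R by rewrite divfK // gt_eqF.
  have : 0 <= q ^+ 3 * (n%:R - 4 - 12 * K%:R / q ^+ 3) by apply: mulr_ge0 (ltW q3_gt0) _; lra.
  by rewrite card_T; lra.
have [h h_le tree] := cut_dense_perfect_tree esym eirr q_gt0 q_le1 (ltn0Sn _) cdense
  T_large v U_large M_large (ltnSn _).
have h_bound : (2 * M).+2%:R <= 19 / q ^+ 4.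
  apply: height_bound => //; rewrite /M -[(Num.truncn _).+1]addn1 natrD lerD2r truncn_le.
  by rewrite divr_ge0 // exprn_ge0 // ltW.
by exists h; split => //; apply: le_trans h_bound; rewrite ler_nat.
Qed.
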